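(* Let $\mathcal G$ be a principal, ubiquitously fiberwise amenable groupoid (standing conventions). Then for every compact $K\subseteq\mathcal G$ and every $\epsilon>0$ there exists a normal $(K,\epsilon)$-Følner set in $\mathcal G$.
   Context: Standing conventions: a groupoid is a $\sigma$-compact, locally compact, Hausdorff, étale, ample groupoid $\mathcal G$ with compact unit space $\mathcal G^{(0)}$. Principal: the only $g$ with $s(g)=r(g)$ are units. For $A,B\subseteq\mathcal G$, $AB$ denotes composable products and $Au=\{a\in A:s(a)=u\}$. A multisection is a finite family $\{C_{i,j}:i,j\in F\}$ of bisections with $C_{i,j}C_{j,k}=C_{i,k}$ and pairwise disjoint levels $C_{i,i}\subseteq\mathcal G^{(0)}$. A finite nonempty $F\subseteq\mathcal G$ is $(K,\epsilon)$-Følner if $|KF\setminus F|\le\epsilon|F|$. $\mathcal G$ is ubiquitously fiberwise amenable if for every compact $K$ and $\epsilon>0$ there is compact $L$ such that every $u\in\mathcal G^{(0)}$ admits a $(K,\epsilon)$-Følner set contained in $Lu\cup\{u\}$. A normal set is a compact open $S\subseteq\mathcal G$ together with compact open multisections $\{C^l_{i,j}:i,j\in F_l\}$, $l=1,\dots,m$, and indices $i_l\in F_l$ with $S=\bigcup_{l=1}^m\bigsqcup_{i\in F_l}C^l_{i,i_l}$ and $\mathcal G^{(0)}=\bigsqcup_{l=1}^mC^l_{i_l,i_l}$; it is a normal $(K,\epsilon)$-Følner set if moreover $Su$ is $(K,\epsilon)$-Følner for every $u\in\mathcal G^{(0)}$. *)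

From HB Require Import structures.
From mathcomp Require Import all_boot all_order all_algebra.
From mathcomp Require Import all_classical all_reals all_analysis.
From mathcomp Require Import finmap.
From mathcomp Require Import Rstruct Rstruct_topology.
From Stdlib Require Rdefinitions.
Notation R := Rdefinitions.R.

Set Implicit Arguments.
Unset Strict Implicit.
Unset Printing Implicit Defensive.
Import Order.TTheory GRing.Theory Num.Theory.
Local Open Scope classical_set_scope.
Local Open Scope ring_scope.

(* The algebraic operations of a groupoid on the carrier T
   (composition gmul g h is only meaningful when gsrc g = grng h). *)
Record groupoid (T : Type) := Groupoid {
  gsrc : T -> T;
  grng : T -> T;
  gmul : T -> T -> T;
  ginv : T -> T }.

Section Groupoids.
Context {T : topologicalType} (G : groupoid T).

Local Notation s := (gsrc G).
Local Notation r := (grng G).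
Local Notation mul := (gmul G).
Local Notation inv := (ginv G).

Definition groupoid_axioms : Prop :=
  [/\ ((forall g, r (s g) = s g) /\ (forall g, s (r g) = r g)) /\
      ((forall g, r (r g) = r g) /\ (forall g, s (s g) = s g)),
      (forall g h, s g = r h -> s (mul g h) = s h /\ r (mul g h) = r g),
      (forall g h k, s g = r h -> s h = r k ->
                     mul (mul g h) k = mul g (mul h k)),
      (forall g, mul (r g) g = g /\ mul g (s g) = g) &
      (forall g, [/\ s (inv g) = r g, r (inv g) = s g,
                     mul g (inv g) = r g & mul (inv g) g = s g])].

Definition units : set T := range r.

Definition setmul (A B : set T) : set T :=
  [set x | exists a b, [/\ A a, B b, s a = r b & x = mul a b]].

Definition fiber (A : set T) (u : T) : set T := [set a | A a /\ s a = u].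

Definition bisection (B : set T) : Prop :=
  (forall x y, B x -> B y -> r x = r y -> x = y) /\
  (forall x y, B x -> B y -> s x = s y -> x = y).

Definition open_bisection (U : set T) : Prop :=
  [/\ open U, bisection U &
      forall V, open V -> V `<=` U -> open (r @` V) /\ open (s @` V)].

Definition compact_open_bisection (B : set T) : Prop :=
  [/\ compact B, open B & bisection B].

Definition composable : set (T * T) := [set p | s p.1 = r p.2].

(* Standing conventions: sigma-compact, locally compact, Hausdorff, etale,
   ample topological groupoid with compact unit space. *)
Definition standing_groupoid : Prop :=
  [/\ groupoid_axioms,
      [/\ continuous s, continuous r, continuous inv &
          {within composable, continuous (fun p : T * T => mul p.1 p.2)}],
      [/\ hausdorff_space T,
          (forall x : T, exists K, compact K /\ nbhs x K),
          (exists f : nat -> set T, (forall n, compact (f n)) /\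
                                    \bigcup_n f n = setT) &
          compact units],
      (forall x : T, exists U, open_bisection U /\ U x) &
      (forall x (W : set T), open W -> W x ->
          exists B, [/\ compact_open_bisection B, B x & B `<=` W])].

Definition principal : Prop := forall g, s g = r g -> units g.

Definition folner (K : set T) (eps : R) (F : set T) : Prop :=
  F !=set0 /\
  exists DF D : {fset T},
    [/\ [set` DF] = F, [set` D] = setmul K F `\` F &
        (#|` D|%:R <= eps * #|` DF|%:R)%R].

Definition ubiquitously_fiberwise_amenable : Prop :=
  forall K : set T, compact K -> forall eps : R, (0 < eps)%R ->
    exists L : set T, compact L /\
      forall u, units u ->
        exists F, folner K eps F /\ F `<=` fiber L u `|` [set u].

Definition multisection (n : nat) (C : 'I_n -> 'I_n -> set T) : Prop :=
  [/\ (forall i j, bisection (C i j)),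
      (forall i j k, setmul (C i j) (C j k) = C i k),
      (forall i, C i i `<=` units) &
      (forall i j, i != j -> C i i `&` C j j = set0)].

Definition normal_set (S : set T) : Prop :=
  compact S /\ open S /\
  exists (m : nat) (n : 'I_m -> nat)
         (C : forall l : 'I_m, 'I_(n l) -> 'I_(n l) -> set T)
         (il : forall l : 'I_m, 'I_(n l)),
    [/\ (forall l, multisection (C l)),
        (forall l i j, compact (C l i j) /\ open (C l i j)),
        S = [set g | exists l i, C l i (il l) g]
          /\ (forall l i j, i != j -> C l i (il l) `&` C l j (il l) = set0),
        units = [set g | exists l, C l (il l) (il l) g] &
        (forall l l', l != l' ->
           C l (il l) (il l) `&` C l' (il l') (il l') = set0)].

Definition normal_folner (K : set T) (eps : R) (S : set T) : Prop :=
  normal_set S /\ forall u, units u -> folner K eps (fiber S u).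

End Groupoids.

(* Fiberwise amenability gives, at each unit u, a finite (K, eps)-Foelner set
   DF inside the source fiber of u; when that fiber is infinite, disjoint right
   translates of Foelner sets can be glued until DF is large enough to absorb
   u itself, and principality makes the translates injective. Since the
   groupoid is etale and ample, compact open bisections through the points of
   DF spread it over a neighbourhood O of u, and the Foelner condition on the
   fibers over w is open in w. On a compact open W inside O the products
   [a (inv b)] of these bisections form a compact open multisection whose
   column at the base level has Foelner fibers. Finitely many such W cover the
   compact unit space; making them disjoint and taking the union of the
   columns gives the normal Foelner set. *)

From mathcomp Require Import all_boot all_order all_algebra.
From mathcomp Require Import all_classical all_reals all_analysis.
From mathcomp Require Import Rstruct Rstruct_topology.
From mathcomp Require Import finmap.
Local Open Scope classical_set_scope.

Set Implicit Arguments.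
Unset Strict Implicit.
Unset Printing Implicit Defensive.
Import Order.TTheory GRing.Theory Num.Theory.

Section FiniteSubcover.
Context {T : topologicalType}.

Let cofinite_fset : set_system {fset T} :=
  [set Q | exists D0 : {fset T}, forall D, (D0 `<=` D)%fset -> Q D].

Let cofinite_fset_filter : Filter cofinite_fset.
Proof.
split; first by exists fset0.
- move=> P Q [D1 H1] [D2 H2]; exists (D1 `|` D2)%fset => D sub; split.
    by apply: H1; apply: fsubset_trans sub; apply: fsubsetUl.
  by apply: H2; apply: fsubset_trans sub; apply: fsubsetUr.
- by move=> P Q PQ [D1 H1]; exists D1 => D /H1 /PQ.
Qed.

Lemma compact_fin_subcover (K : set T) (V : T -> set T) : compact K ->
  (forall x, K x -> nbhs x (V x)) ->
  exists D : {fset T}, (forall x, x \in D -> K x) /\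
    K `<=` [set y | exists2 x, x \in D & V x y].
Proof.
move=> cK nV.
have [|D0 /(_ D0 (fsubset_refl _)) HD] := (compact_near_coveringP K).1 cK
  {fset T} cofinite_fset (fun D y => exists2 x, x \in D & K x /\ V x y)
  cofinite_fset_filter.
  move=> x Kx; exists (V x, [set D : {fset T} | x \in D]) => /=.
    by split; [exact: nV | exists [fset x]%fset => D; rewrite fsub1set].
  by move=> [y D] /= [Vy xD]; exists x.
exists [fset x in D0 | `[< K x >]]%fset; split.
  by move=> x; rewrite !inE => /andP[_ /asboolP].
move=> y /HD [x xD [Kx Vy]]; exists x => //.
by rewrite !inE xD /=; apply/asboolP.
Qed.

Lemma compact_bigcup_fin (I : finType) (F : I -> set T) :
  (forall i, compact (F i)) -> compact [set x | exists i, F i x].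
Proof.
move=> cF; suff -> : [set x | exists i, F i x] = \big[setU/set0]_(i <- enum I) F i.
  exact: bigsetU_compact.
rewrite -bigcup_seq; apply/seteqP; split => x.
  by move=> [i Fi]; exists i => //=; rewrite mem_enum.
by move=> [i _ Fi]; exists i.
Qed.

End FiniteSubcover.

Lemma separate_fin_points {T : topologicalType} N (f : 'I_N -> T) :
  hausdorff_space T -> injective f ->
  exists V : 'I_N -> set T, (forall i, nbhs (f i) (V i)) /\
    forall i j x, i != j -> V i x -> V j x -> False.
Proof.
move=> hT finj.
have sep (ij : 'I_N * 'I_N) : exists AB : set T * set T, ij.1 != ij.2 ->
    [/\ open AB.1, open AB.2, AB.1 (f ij.1), AB.2 (f ij.2) & AB.1 `&` AB.2 = set0].
  case: ij => i j; have [_|ne] := eqVneq i j; first by exists (setT, setT).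
  have ne' : f i != f j by apply: contra ne => /eqP /finj ->.
  move: hT; rewrite open_hausdorff => /(_ _ _ ne').
  move=> [[A1 A2] /= [iA1 jA2] [oA1 oA2 /eqP A12]].
  by exists (A1, A2) => _; split => //; apply: set_mem.
have [AB hAB] := choice sep.
exists (fun i x => forall j, i != j -> (AB (i, j)).1 x /\ (AB (j, i)).2 x); split.
  move=> i; apply: filter_forall => j; have [<-|ne] := eqVneq i j.
    by apply: filterS filterT => x _.
  have [oA _ Ai _ _] := hAB (i, j) ne.
  have ji : j != i by rewrite eq_sym.
  have [_ oB _ Bi _] := hAB (j, i) ji.
  apply: filterS (filterI (open_nbhs_nbhs (conj oA Ai)) (open_nbhs_nbhs (conj oB Bi))).
  by move=> x [h1 h2] _.
move=> i j x ne Vi Vj; have [_ _ _ _ disj] := hAB (i, j) ne.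
have ji : j != i by rewrite eq_sym.
have : ((AB (i, j)).1 `&` (AB (i, j)).2) x by split; [case: (Vi j ne) | case: (Vj i ji)].
by rewrite disj.
Qed.

Section DisjointedFin.
Context {T : topologicalType} (m : nat) (W : 'I_m -> set T).

Definition disjointed_fin (l : 'I_m) : set T :=
  [set x | W l x /\ forall k : 'I_m, (k < l)%N -> ~ W k x].

Lemma disjointed_fin_sub l : disjointed_fin l `<=` W l.
Proof. by move=> x []. Qed.

Lemma disjointed_fin_disjoint l l' x :
  disjointed_fin l x -> disjointed_fin l' x -> l = l'.
Proof.
move=> [Wl hl] [Wl' hl']; have [lt|gt|/val_inj //] := ltngtP l l'.
  by case: (hl' _ lt Wl).
by case: (hl _ gt Wl').
Qed.

Lemma disjointed_fin_cover x : (exists l, W l x) -> exists l, disjointed_fin l x.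
Proof.
move=> [k Wk]; pose P n := `[< exists k : 'I_m, (k : nat) = n /\ W k x >].
have Pk : exists n, P n by exists k; apply/asboolP; exists k.
case: (ex_minnP Pk) => _ /asboolP [l [<- Wl]] minl.
exists l; split => // k' k'l Wk'; suff : (l <= k')%N by rewrite leqNgt k'l.
by apply: minl; apply/asboolP; exists k'.
Qed.

Hypotheses (hT : hausdorff_space T) (coW : forall l, compact (W l) /\ open (W l)).

Let closedW l : closed (W l).
Proof. by apply: compact_closed => //; case: (coW l). Qed.

Lemma compact_open_disjointed_fin l :
  compact (disjointed_fin l) /\ open (disjointed_fin l).
Proof.
split.
  apply: compact_closedI; first by case: (coW l).
  rewrite -openC openE => x /= nx.
  have [k kl Wk] : exists2 k : 'I_m, (k < l)%N & W k x.
    by apply: contrapT => none; apply: nx => k kl Wk; apply: none; exists k.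
  apply: (@filterS _ _ _ (W k)); last by apply: open_nbhs_nbhs; split => //; case: (coW k).
  by move=> y Wy hy; exact: (hy k kl Wy).
rewrite openE => x [Wx nx].
have nWl : nbhs x (W l) by apply: open_nbhs_nbhs; split => //; case: (coW l).
have nlower : nbhs x [set y | forall k : 'I_m, (k < l)%N -> ~ W k y].
  apply: filter_forall => k; have [kl|_] := boolP (k < l)%N; last first.
    by apply: filterS filterT.
  have oC : open (~` W k) by rewrite openC; exact: closedW.
  by apply: filterS (open_nbhs_nbhs (conj oC (nx k kl))) => y ny _; exact: ny.
by apply: filterS (filterI nWl nlower) => y [].
Qed.

End DisjointedFin.

Lemma card_le_cover {T : choiceType} {I : eqType} (A : set T) (l : seq I)
    (h : I -> set T) :
  A `<=` [set y | exists2 k, k \in l & h k y] ->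
  (forall k y y', h k y -> h k y' -> A y -> A y' -> y = y') ->
  exists D : {fset T}, [set` D] = A /\ (#|` D| <= size l)%N.
Proof.
move=> Acov hinj.
pose g k := if pselect (exists y, A y /\ h k y) is left P
  then Some (projT1 (cid P)) else None.
exists [fset y in pmap g l]%fset; split.
  apply/seteqP; split => y /=.
    rewrite !inE mem_pmap => /mapP[k kl].
    by rewrite /g; case: pselect => // P [->]; case: (projT2 (cid P)).
  move=> Ay; have [k kl hky] := Acov y Ay.
  rewrite !inE mem_pmap; apply/mapP; exists k => //.
  rewrite /g; case: pselect => [P|]; last by case; exists y.
  have [A1 h1] := projT2 (cid P); congr Some.
  exact: (hinj k _ _ hky h1 Ay A1).
rewrite card_fseq; apply: leq_trans (size_undup _) _.
by rewrite size_pmap count_size.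
Qed.

Section GroupoidAlgebra.
Context {T : topologicalType} (G : groupoid T).
Local Notation s := (gsrc G).
Local Notation r := (grng G).
Local Notation mul := (gmul G).
Local Notation inv := (ginv G).
Hypothesis HA : groupoid_axioms G.

Lemma src_rng g : s (r g) = r g. Proof. by case: HA => [[[]]]. Qed.
Lemma rng_rng g : r (r g) = r g. Proof. by case: HA => [[_ []]]. Qed.
Lemma src_mul g h : s g = r h -> s (mul g h) = s h.
Proof. by case: HA => _ H _ _ _ /H []. Qed.
Lemma rng_mul g h : s g = r h -> r (mul g h) = r g.
Proof. by case: HA => _ H _ _ _ /H []. Qed.
Lemma gmulA g h k : s g = r h -> s h = r k -> mul (mul g h) k = mul g (mul h k).
Proof. by case: HA => _ _ H _ _; apply: H. Qed.
Lemma gmul_src g : mul g (s g) = g. Proof. by case: HA => _ _ _ H _; case: (H g). Qed.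
Lemma gmul_rng g : mul (r g) g = g. Proof. by case: HA => _ _ _ H _; case: (H g). Qed.
Lemma src_inv g : s (inv g) = r g. Proof. by case: HA => _ _ _ _ H; case: (H g). Qed.
Lemma rng_inv g : r (inv g) = s g. Proof. by case: HA => _ _ _ _ H; case: (H g). Qed.
Lemma gmul_invl g : mul (inv g) g = s g. Proof. by case: HA => _ _ _ _ H; case: (H g). Qed.

Lemma units_rng u : units G u -> r u = u. Proof. by case=> g _ <-; rewrite rng_rng. Qed.
Lemma units_src u : units G u -> s u = u. Proof. by case=> g _ <-; rewrite src_rng. Qed.

Lemma rng_src_mul_inv a b : s a = s b ->
  r (mul a (inv b)) = r a /\ s (mul a (inv b)) = r b.
Proof. by move=> e; rewrite rng_mul ?src_mul ?src_inv ?rng_inv. Qed.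

Hypothesis HP : principal G.

(* [mul g (inv h)] has equal source and range, hence is a unit. *)
Lemma eq_src_rng g h : s g = s h -> r g = r h -> g = h.
Proof.
move=> sgh rgh; set k := mul g (inv h).
have [rk sk] : r k = r g /\ s k = r h by apply: rng_src_mul_inv.
have kE : k = r g by rewrite -[LHS]units_rng ?rk //; apply: HP; rewrite sk rk.
have : mul k h = g by rewrite /k gmulA ?src_inv ?rng_inv // gmul_invl -sgh gmul_src.
by rewrite kE rgh gmul_rng.
Qed.

End GroupoidAlgebra.

Section EtaleTopology.
Context {T : topologicalType} (G : groupoid T).
Local Notation s := (gsrc G).
Local Notation r := (grng G).
Local Notation mul := (gmul G).
Local Notation inv := (ginv G).
Hypothesis HS : standing_groupoid G.

Lemma standing_groupoid_axioms : groupoid_axioms G. Proof. by case: HS. Qed.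
Lemma continuous_src : continuous s. Proof. by case: HS => _ []. Qed.
Lemma continuous_rng : continuous r. Proof. by case: HS => _ []. Qed.
Lemma standing_hausdorff : hausdorff_space T. Proof. by case: HS => _ _ []. Qed.
Lemma compact_units : compact (units G). Proof. by case: HS => _ _ []. Qed.
Lemma ample_basis x (W : set T) : open W -> W x ->
  exists B, [/\ compact_open_bisection G B, B x & B `<=` W].
Proof. by case: HS => _ _ _ _; apply. Qed.
Lemma etale_bisection x : exists U, open_bisection G U /\ U x.
Proof. by case: HS. Qed.

Lemma compact_closedG (A : set T) : compact A -> closed A.
Proof. by move=> cA; apply: compact_closed => //; exact: standing_hausdorff. Qed.

Let open_image (f : T -> T) V :
  (forall U, open_bisection G U -> forall V, open V -> V `<=` U -> open (f @` V)) ->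
  open V -> open (f @` V).
Proof.
move=> fopen oV; rewrite openE => y [x Vx <-].
have [U [[oU bU imU] Ux]] := etale_bisection x.
have oVU : open (f @` (V `&` U)) by apply: fopen (openI oV oU) (@subIsetr _ _ _).
apply: (@filterS _ _ _ (f @` (V `&` U))); first by move=> z [w [Vw _] <-]; exists w.
by apply: open_nbhs_nbhs; split => //; exists x.
Qed.

Lemma open_src_image V : open V -> open (s @` V).
Proof. by apply: open_image => U [_ _ imU] W oW WU; case: (imU W oW WU). Qed.

Lemma open_rng_image V : open V -> open (r @` V).
Proof. by apply: open_image => U [_ _ imU] W oW WU; case: (imU W oW WU). Qed.

Lemma open_units : open (units G).
Proof. exact: open_rng_image openT. Qed.

Lemma bisection_fin_cover (K : set T) : compact K ->
  exists (U : T -> set T) (D : {fset T}),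
    (forall x, bisection G (U x)) /\ K `<=` [set y | exists2 x, x \in D & U x y].
Proof.
move=> cK; have [U hU] := choice etale_bisection.
have nU x : K x -> nbhs x (U x).
  by move=> _; case: (hU x) => -[oU _ _] Ux; apply: open_nbhs_nbhs.
have [D [_ cov]] := compact_fin_subcover cK nU.
by exists U, D; split => // x; case: (hU x) => -[].
Qed.

Lemma near_src_image (B : set T) f : open B -> B f ->
  \forall w \near s f, exists a, B a /\ s a = w.
Proof.
move=> oB Bf; have : nbhs (s f) (s @` B).
  by apply: open_nbhs_nbhs; split; [exact: open_src_image | exists f].
by apply: filterS => w [a Ba <-]; exists a.
Qed.

Lemma near_src_bisection (B N : set T) f : open B -> bisection G B -> B f ->
  nbhs f N -> \forall w \near s f, forall a, B a -> s a = w -> N a.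
Proof.
move=> oB bB Bf Nf.
have oV : open (B `&` interior N) by apply: openI => //; exact: open_interior.
have : nbhs (s f) (s @` (B `&` interior N)).
  by apply: open_nbhs_nbhs; split; [exact: open_src_image | exists f].
apply: filterS => w [v [Bv Nv] <-] a Ba sa.
have -> : a = v by apply: bB.2.
exact: interior_subset.
Qed.

Lemma near_mul a b N : s a = r b -> nbhs (mul a b) N ->
  exists P Q, [/\ nbhs a P, nbhs b Q &
    forall x y, P x -> Q y -> s x = r y -> N (mul x y)].
Proof.
move=> ab Nab; have [_ [_ _ _ cmul] _ _ _] := HS.
have [[P Q] /= [Pa Qb] PQ] := (subspace_continuousP _ _).1 cmul (a, b) ab N Nab.
by exists P, Q; split => // x y Px Qy sxy; exact: (PQ (x, y)).
Qed.

Lemma near_mul_inv (A B E : set T) a0 b0 :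
  open A -> bisection G A -> A a0 -> open B -> bisection G B -> B b0 ->
  s a0 = s b0 -> open E -> E (mul a0 (inv b0)) ->
  \forall w \near s a0, forall a b, A a -> B b -> s a = w -> s b = w ->
    E (mul a (inv b)).
Proof.
move=> oA bA Aa0 oB bB Bb0 sab oE Eab.
have HA := standing_groupoid_axioms; have [_ [_ _ cinv _] _ _ _] := HS.
have comp : s a0 = r (inv b0) by rewrite (rng_inv HA).
have [P [Q [Pa Qb PQ]]] := near_mul comp (open_nbhs_nbhs (conj oE Eab)).
have nearA := near_src_bisection oA bA Aa0 Pa.
have nearB := near_src_bisection oB bB Bb0 (cinv _ _ Qb).
rewrite -sab in nearB.
apply: filterS (filterI nearA nearB) => w [hA hB] a b Aa Bb sa sb.
by apply: PQ; [exact: hA | exact: hB | rewrite (rng_inv HA) sa].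
Qed.

Lemma tube_mul K f (Z : set T) : compact K -> open Z ->
  (forall k, K k -> s k = r f -> Z (mul k f)) ->
  exists Q, nbhs f Q /\ forall a k, Q a -> K k -> s k = r a -> Z (mul k a).
Proof.
move=> cK oZ KZ.
have step k : exists PQ : set T * set T, K k -> [/\ nbhs k PQ.1, nbhs f PQ.2 &
    forall x y, PQ.1 x -> PQ.2 y -> s x = r y -> Z (mul x y)].
  have [Kk|] := pselect (K k); last by exists (setT, setT).
  have [e|ne] := eqVneq (s k) (r f).
    have [P [Q [Pk Qf PQ]]] := near_mul e (open_nbhs_nbhs (conj oZ (KZ k Kk e))).
    by exists (P, Q).
  have := standing_hausdorff; rewrite open_hausdorff => /(_ _ _ ne).
  move=> [[A1 A2] /= [kA1 fA2] [oA1 oA2 /eqP A12]].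
  exists (s @^-1` A1, r @^-1` A2) => _; split => /=.
  - by apply: continuous_src; apply: open_nbhs_nbhs; split => //; apply: set_mem.
  - by apply: continuous_rng; apply: open_nbhs_nbhs; split => //; apply: set_mem.
  - move=> x y A1x A2y sxy; have : (A1 `&` A2) (s x) by split => //; rewrite sxy.
    by rewrite A12.
have [PQ hPQ] := choice step.
have nP k : K k -> nbhs k (PQ k).1 by move=> /hPQ [].
have [D [DK cov]] := compact_fin_subcover cK nP.
exists (\bigcap_(k in [set` D]) (PQ k).2); split.
  by apply: filter_bigI => k kD; case: (hPQ k (DK k kD)).
move=> a k Qa Kk ska; have [k0 k0D Pk] := cov k Kk.
by case: (hPQ k0 (DK _ k0D)) => _ _; apply => //; exact: Qa k0 k0D.
Qed.

Lemma near_translates_in K (Z B : set T) f : compact K -> open Z -> open B ->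
  bisection G B -> B f -> (forall k, K k -> s k = r f -> Z (mul k f)) ->
  \forall w \near s f, forall a, B a -> s a = w ->
    forall k, K k -> s k = r a -> Z (mul k a).
Proof.
move=> cK oZ oB bB Bf KZ; have [Q [Qf HQ]] := tube_mul cK oZ KZ.
apply: filterS (near_src_bisection oB bB Bf Qf) => w h a Ba sa k Kk ska.
exact: HQ (h a Ba sa) Kk ska.
Qed.

End EtaleTopology.

Section FolnerSets.
Context {T : topologicalType} (G : groupoid T).
Local Notation s := (gsrc G).
Local Notation r := (grng G).
Local Notation mul := (gmul G).

Definition boundary (K A : set T) : set T := setmul G K A `\` A.

Definition folner_fset (K : set T) (d : R) (E : {fset T}) : Prop :=
  exists X : {fset T}, [set` X] = boundary K [set` E] /\
    (#|` X|%:R <= d * #|` E|%:R)%R.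

Lemma folner_fset0 K d : folner_fset K d fset0.
Proof.
exists fset0; rewrite cardfs0 mulr0; split => //.
by rewrite set_fset0; apply/seteqP; split => // y [[k [x [_ []]]]].
Qed.

Lemma folner_fsetU K d E1 E2 : folner_fset K d E1 -> folner_fset K d E2 ->
  (E1 `&` E2 = fset0)%fset -> folner_fset K d (E1 `|` E2)%fset.
Proof.
move=> [X1 [h1 c1]] [X2 [h2 c2]] E12.
have cov : boundary K [set` (E1 `|` E2)%fset] `<=`
    [set y | exists2 k, k \in enum_fset X1 ++ enum_fset X2 & [set k] y].
  move=> y [[k [x [Kk Ex skx ->]]] nE]; exists (mul k x) => //.
  rewrite mem_cat; apply/orP; move: Ex; rewrite /= in_fsetU => /orP[xE|xE].
    left; have : [set` X1] (mul k x); last by [].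
    rewrite h1; split; first by exists k, x.
    by move=> /= h; apply: nE; rewrite /= in_fsetU h.
  right; have : [set` X2] (mul k x); last by [].
  rewrite h2; split; first by exists k, x.
  by move=> /= h; apply: nE; rewrite /= in_fsetU h orbT.
have [X [hX cX]] := card_le_cover cov
  (fun k y y' (h : [set k] y) (h' : [set k] y') _ _ => etrans h (esym h')).
exists X; split => //.
rewrite cardfsU E12 cardfs0 subn0 natrD mulrDr; apply: le_trans (lerD c1 c2).
by rewrite -natrD ler_nat -size_cat.
Qed.

Hypotheses (HA : groupoid_axioms G) (HP : principal G).

Lemma folner_fset_src_fiber K (d : R) (E : {fset T}) u : (0 <= d)%R ->
  [set` E] = [set g | s g = u] -> folner_fset K d E.
Proof.
move=> d0 hE; have sE x : [set` E] x -> s x = u by rewrite hE.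
exists fset0; split; last by rewrite cardfs0 mulr_ge0.
rewrite set_fset0; apply/seteqP; split => // y [[k [x [_ Ex skx ->]]] nE]; apply: nE.
by rewrite hE /= (src_mul HA skx); exact: sE.
Qed.

(* Right translation by [g] is injective on arrows ending at [r g] and maps
   the boundary of [F] onto the boundary of [F g]. *)
Lemma folner_fset_translate K d (F : {fset T}) g :
  (forall x, x \in F -> s x = r g) -> folner_fset K d F ->
  let E := [fset mul f g | f in F]%fset in
  [/\ folner_fset K d E, #|` E| = #|` F| & forall x, x \in E -> s x = s g].
Proof.
move=> sF [X [hX cX]] E.
have inj : {in F &, injective (fun f => mul f g)}.
  move=> f f' fF f'F /= e; apply: (eq_src_rng HA HP); first by rewrite !sF.
  by rewrite -(rng_mul HA (sF _ fF)) e (rng_mul HA (sF _ f'F)).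
have cE : #|` E| = #|` F| by rewrite /E card_in_imfset.
split => //; last by move=> x /imfsetP[f fF ->]; rewrite (src_mul HA (sF _ fF)).
have cov : boundary K [set` E] `<=`
    [set y | exists2 k, k \in enum_fset X & [set mul k g] y].
  move=> y [[k [_ [Kk /imfsetP[f fF ->] skx ->]]] nE].
  have sf := sF _ fF; have skf : s k = r f by rewrite skx (rng_mul HA sf).
  exists (mul k f); last by rewrite /= (gmulA HA skf sf).
  have : [set` X] (mul k f); last by [].
  rewrite hX; split; first by exists k, f.
  move=> /= kfF; apply: nE => /=; apply/imfsetP; exists (mul k f) => //.
  by rewrite (gmulA HA skf sf).
have [Y [hY cY]] := card_le_cover cov (fun k y y' (h : [set mul k g] y)
  (h' : [set mul k g] y') _ _ => etrans h (esym h')).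
by exists Y; split => //; rewrite cE; apply: le_trans cX; rewrite ler_nat.
Qed.

(* The boundary of [u |` E] is that of [E] plus at most one arrow of [K u]
   per sheet of a bisection cover of [K]. *)
Lemma folner_fset_add_unit K (d d' : R) (U : T -> set T) (D E : {fset T}) u :
  units G u -> (forall x, bisection G (U x)) ->
  K `<=` [set y | exists2 x, x \in D & U x y] ->
  (forall x, x \in E -> s x = u) -> folner_fset K d E ->
  (#|` D|%:R <= d' * #|` E|%:R)%R -> (0 <= d + d')%R ->
  folner_fset K (d + d')%R (u |` E)%fset.
Proof.
move=> uu bU covK sE [X [hX cX]] cD dd'.
have inU x : (x \in (u |` E)%fset) = (x == u) || (x \in E) by rewrite !inE.
pose h (k : T + T) : set T := match k with
  | inl x => [set x] | inr z => [set y | U z y /\ s y = u] end.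
have cov : boundary K [set` (u |` E)%fset] `<=` [set y | exists2 k,
    k \in map inl (enum_fset X) ++ map inr (enum_fset D) & h k y].
  move=> y [[k [x [Kk xE skx ->]]] nE].
  move: xE; rewrite /= inU => /orP[/eqP xu|xE].
    subst x; have sk : s k = u by rewrite skx (units_rng HA uu).
    have [z zD Uz] := covK k Kk; exists (inr z); first by rewrite mem_cat map_f ?orbT.
    by rewrite -{1}sk gmul_src.
  exists (inl (mul k x)) => //; rewrite mem_cat map_f //.
  have : [set` X] (mul k x); last by [].
  rewrite hX; split; first by exists k, x.
  by move=> kxE; apply: nE; rewrite /= inU; apply/orP; right.
have inj k y y' : h k y -> h k y' -> boundary K [set` (u |` E)%fset] y ->
    boundary K [set` (u |` E)%fset] y' -> y = y'.
  case: k => [x|z] /= ; first by move=> -> ->.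
  by move=> [Uy sy] [Uy' sy'] _ _; apply: (bU z).2 => //; rewrite sy sy'.
have [Y [hY cY]] := card_le_cover cov inj.
exists Y; split => //; apply: (@le_trans _ _ (#|` X|%:R + #|` D|%:R)%R).
  by rewrite -natrD ler_nat (leq_trans cY) // size_cat !size_map.
apply: le_trans (lerD cX cD) _; rewrite -mulrDl ler_wpM2l // ler_nat.
by rewrite cardfsU1 leq_addl.
Qed.

End FolnerSets.

Section FolnerAtUnit.
Context {T : topologicalType} (G : groupoid T).
Local Notation s := (gsrc G).
Local Notation r := (grng G).
Local Notation mul := (gmul G).
Hypotheses (HS : standing_groupoid G) (HP : principal G).
Let HA := standing_groupoid_axioms HS.

Definition finite_src_fiber u := exists D : {fset T}, [set` D] = [set g | s g = u].

(* Each element of [E] and each pair (sheet of a bisection cover of [L],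
   element of [E]) excludes at most one arrow of [s^-1(u)]. *)
Lemma exists_arrow_avoiding (L : set T) (E : {fset T}) u : compact L ->
  ~ finite_src_fiber u ->
  exists g, [/\ s g = u, (forall e, e \in E -> r e <> r g) &
    forall y e, L y -> s y = r g -> e \in E -> r y <> r e].
Proof.
move=> cL infinite.
have [U [D [bU covL]]] := bisection_fin_cover HS cL.
apply: contrapT => none; apply: infinite.
pose h (k : T + (T * T)) : set T := match k with
  | inl e => [set g | s g = u /\ r g = r e]
  | inr (x, e) => [set g | s g = u /\
                    exists y, [/\ U x y, s y = r g & r y = r e]]
  end.
have cov : [set g | s g = u] `<=` [set g | exists2 k,
    k \in map inl (enum_fset E) ++
          [seq inr (x, e) | x <- enum_fset D, e <- enum_fset E] & h k g].
  move=> g /= sg; apply: contrapT => nk; apply: none; exists g; split => //.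
    by move=> e eE reg; apply: nk; exists (inl e); rewrite ?mem_cat ?map_f.
  move=> y e Ly syg eE rye; have [x xD Uy] := covL y Ly; apply: nk.
  exists (inr (x, e)); last by split => //; exists y.
  rewrite mem_cat; apply/orP; right.
  exact: (allpairs_f (fun x e => inr (x, e))).
have inj k y y' : h k y -> h k y' -> [set g | s g = u] y ->
    [set g | s g = u] y' -> y = y'.
  case: k => [e|[x e]] /=.
    move=> [sy ry] [sy' ry'] _ _.
    by apply: (eq_src_rng HA HP); rewrite ?sy ?sy' ?ry ?ry'.
  move=> [sy [z [Uz sz rz]]] [sy' [z' [Uz' sz' rz']]] _ _.
  have zz : z = z' by apply: (bU x).1 => //; rewrite rz rz'.
  by apply: (eq_src_rng HA HP); rewrite ?sy ?sy' // -sz -sz' zz.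
by have [D' [hD' _]] := card_le_cover cov inj; exists D'.
Qed.

Variables (K L : set T) (d : R) (u : T).
Hypotheses (cL : compact L) (infinite : ~ finite_src_fiber u).
Hypothesis ufa : forall v, units G v ->
  exists F, folner G K d F /\ F `<=` fiber G L v `|` [set v].

(* For [g] as in [exists_arrow_avoiding], the translate [F g] of a Foelner
   set [F] at [r g] is disjoint from [E]. *)
Lemma folner_fset_extend (E : {fset T}) :
  (forall x, x \in E -> s x = u) -> folner_fset G K d E ->
  exists E' : {fset T}, [/\ forall x, x \in E' -> s x = u,
    folner_fset G K d E' & (#|` E| < #|` E'|)%N].
Proof.
move=> sE fE; have [g [sg avoid_rng avoid_L]] := exists_arrow_avoiding E cL infinite.
have uv : units G (r g) by exists g.
have [F [[[f0 Ff0] [DF [X [hDF hX cX]]]] FL]] := ufa uv.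
have sF x : x \in DF -> s x = r g.
  move=> xD; have /FL [[_ ->]|->] // : F x by rewrite -hDF.
  by rewrite (units_src HA uv).
have fDF : folner_fset G K d DF by exists X; rewrite hDF.
have [fE2 cE2 sE2] := folner_fset_translate HA HP sF fDF.
set E2 := [fset mul f g | f in DF]%fset in fE2 cE2 sE2.
have disj : (E `&` E2 = fset0)%fset.
  apply/eqP; rewrite -fsubset0; apply/fsubsetP => x; rewrite in_fsetI.
  move=> /andP[xE /imfsetP[f fD xe]]; exfalso.
  have rx : r x = r f by rewrite xe (rng_mul HA (sF _ fD)).
  have /FL [[Lf sf]|fv] : F f by rewrite -hDF.
    by apply: (avoid_L f x Lf sf xE).
  by apply: (avoid_rng x xE); rewrite rx fv (units_rng HA uv).
exists (E `|` E2)%fset; split.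
- by move=> x; rewrite in_fsetU => /orP[/sE|/sE2] //; rewrite sg.
- exact: folner_fsetU.
- rewrite cardfsU disj cardfs0 subn0 cE2 -addn1 leq_add //.
  rewrite cardfs_gt0; apply/eqP => D0; move: Ff0; rewrite -hDF D0.
  by rewrite /= in_fset0.
Qed.

Lemma folner_fset_large n : exists E : {fset T},
  [/\ forall x, x \in E -> s x = u, folner_fset G K d E & (n <= #|` E|)%N].
Proof.
elim: n => [|n [E [sE fE nE]]].
  by exists fset0; split => [x||//]; rewrite ?in_fset0 //; exact: folner_fset0.
have [E' [sE' fE' EE']] := folner_fset_extend sE fE.
by exists E'; split => //; apply: leq_ltn_trans EE'.
Qed.

End FolnerAtUnit.

Lemma folner_fset_at_unit {T : topologicalType} (G : groupoid T) :
  standing_groupoid G -> principal G -> ubiquitously_fiberwise_amenable G ->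
  forall K u (eps : R), compact K -> (0 < eps)%R -> units G u ->
  exists DF : {fset T}, [/\ u \in DF, (forall x, x \in DF -> gsrc G x = u) &
    folner_fset G K eps DF].
Proof.
move=> HS HP ufa K u eps cK eps0 uu; have HA := standing_groupoid_axioms HS.
have [[E hE]|infinite] := pselect (finite_src_fiber G u).
  exists E; split; last exact (folner_fset_src_fiber HA K (ltW eps0) hE).
    by have : [set g | gsrc G g = u] u; [rewrite /= (units_src HA uu) | rewrite -hE].
  by move=> x xE; have : [set` E] x by []; rewrite hE.
have [U [D [bU covK]]] := bisection_fin_cover HS cK.
pose d := (eps / 2)%R; have d0 : (0 < d)%R by rewrite divr_gt0.
have [L [cL FL]] := ufa K cK d d0.
have [E [sE fE largeE]] :=
  folner_fset_large HS HP cL infinite FL (Num.bound (#|` D|%:R / d)%R).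
have cD : (#|` D|%:R <= d * #|` E|%:R)%R.
  have bD := archi_boundP (divr_ge0 (ler0n _ #|` D|) (ltW d0)).
  rewrite -(divfK (lt0r_neq0 d0) (#|` D|%:R)%R) mulrC ler_pM2l //.
  by apply: le_trans (ltW bD) _; rewrite ler_nat.
exists (u |` E)%fset; split; first by rewrite !inE eqxx.
  by move=> x; rewrite !inE => /orP[/eqP ->|/sE] //; rewrite (units_src HA uu).
have -> : eps = (d + d)%R by rewrite -splitr.
by apply: folner_fset_add_unit covK sE fE cD _; rewrite ?addr_ge0 ?ltW.
Qed.

Section LocalTowers.
Context {T : topologicalType} (G : groupoid T).
Local Notation s := (gsrc G).
Local Notation r := (grng G).
Local Notation mul := (gmul G).
Local Notation inv := (ginv G).
Hypotheses (HS : standing_groupoid G) (HP : principal G).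
Let HA := standing_groupoid_axioms HS.

Lemma exists_separated_sections N (a : 'I_N -> T) (i0 : 'I_N) :
  injective (r \o a) -> units G (a i0) ->
  exists B : 'I_N -> set T, [/\ forall i, compact_open_bisection G (B i),
    forall i, B i (a i), B i0 `<=` units G &
    forall i j x y, i != j -> B i x -> B j y -> r x <> r y].
Proof.
move=> ra_inj ua.
have [V [nV disjV]] := separate_fin_points (standing_hausdorff HS) ra_inj.
have Bex i : exists B, [/\ compact_open_bisection G B, B (a i) &
    B `<=` r @^-1` (V i)° `&` (if i == i0 then units G else setT)].
  apply: (ample_basis HS) => //; last by split; [exact: nV | case: eqP => [->|]].
  apply: openI; first exact: (continuousP _).1 (continuous_rng HS) _ (@open_interior _ _).
  by case: eqP => _; [exact: (open_units HS) | exact: openT].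
have [B hB] := choice Bex.
exists B; split => [i|i|x B0x|i j x y ne Bx By rxy]; first by case: (hB i).
- by case: (hB i).
- by case: (hB i0) => _ _ /(_ x B0x) []; rewrite eqxx.
have inV k z : B k z -> V k (r z).
  by move=> Bz; case: (hB k) => _ _ /(_ z Bz) [/interior_subset].
by apply: (disjV i j (r x) ne (inV _ _ Bx)); rewrite rxy; apply: inV.
Qed.

Lemma folner_of_sections K (eps : R) N (B : 'I_N -> set T) (X : {fset T})
    (Y : T -> set T) w :
  (forall i, bisection G (B i)) -> (forall x, bisection G (Y x)) ->
  (forall i j a b, i != j -> B i a -> B j b -> r a <> r b) ->
  (forall i, exists a, B i a /\ s a = w) ->
  (forall i a, B i a -> s a = w -> forall k, K k -> s k = r a ->
     (exists j, B j (mul k a)) \/ exists2 x, x \in X & Y x (mul k a)) ->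
  (0 < N)%N -> (#|` X|%:R <= eps * N%:R)%R ->
  folner G K eps [set a | exists i, B i a /\ s a = w].
Proof.
move=> bB bY disjB secB bdB N0 cX; have [af haf] := choice secB.
have af_inj : injective af.
  move=> i j e; apply/eqP/negPn/negP => ne; have [[Bi _] [Bj _]] := (haf i, haf j).
  by apply: (disjB i j _ _ ne Bi Bj); rewrite e.
pose l := [seq af i | i <- enum 'I_N].
have ul : uniq l by rewrite map_inj_uniq ?enum_uniq.
set Fw := [set a | exists i, B i a /\ s a = w].
have Fw_l : Fw = [set x | x \in l].
  apply/seteqP; split => x /=; last by move=> /mapP [i _ ->]; exists i; exact: haf i.
  move=> [i [Bx sx]]; have [Bi si] := haf i.
  have -> : x = af i by apply: (bB i).2 => //; rewrite sx si.
  by rewrite map_f // mem_enum.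
have cov : boundary G K Fw `<=`
    [set y | exists2 x, x \in enum_fset X & [set y | Y x y /\ s y = w] y].
  move=> y [[k [a [Kk [i [Ba sa]] ska ->]]] nF].
  have ska' : s (mul k a) = w by rewrite (src_mul HA ska).
  case: (bdB i a Ba sa k Kk ska) => [[j Bj]|[x xX Yx]]; last by exists x.
  by exfalso; apply: nF; exists j.
have [D [hD cD]] := card_le_cover cov (fun x y y' (hy : Y x y /\ s y = w)
  (hy' : Y x y' /\ s y' = w) _ _ => (bY x).2 y y' hy.1 hy'.1 (etrans hy.2 (esym hy'.2))).
split; first by exists (af (Ordinal N0)), (Ordinal N0); exact: haf.
exists [fset x in l]%fset, D; split => //.
  by apply/seteqP; split => x; rewrite Fw_l /= inE.
rewrite card_fseq undup_id // size_map size_enum_ord; apply: le_trans cX.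
by rewrite ler_nat.
Qed.

Record local_tower (K : set T) (eps : R) N (B : 'I_N -> set T)
    (E : 'I_N -> 'I_N -> set T) (i0 : 'I_N) (O : set T) : Prop := LocalTower {
  local_tower_open : open O;
  local_tower_units : O `<=` units G;
  local_tower_sections : forall i, compact_open_bisection G (B i);
  local_tower_connectors : forall i j, compact_open_bisection G (E i j);
  local_tower_base : B i0 `<=` units G;
  local_tower_disjoint : forall i j a b, i != j -> B i a -> B j b -> r a <> r b;
  local_tower_over : forall w, O w -> forall i, exists a, B i a /\ s a = w;
  local_tower_connect : forall w, O w -> forall i j a b, B i a -> B j b ->
    s a = w -> s b = w -> E i j (mul a (inv b));
  local_tower_folner : forall w, O w ->
    folner G K eps [set a | exists i, B i a /\ s a = w] }.

Lemma enum_src_fiber (DF : {fset T}) u :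
  u \in DF -> (forall x, x \in DF -> s x = u) ->
  exists (a : 'I_#|` DF| -> T) (i0 : 'I_#|` DF|), [/\ a i0 = u,
    injective (r \o a), forall i, a i \in DF & forall x, x \in DF -> exists i, a i = x].
Proof.
move=> uDF sDF; pose a (i : 'I_#|` DF|) := nth u (enum_fset DF) i.
have aD i : a i \in DF by rewrite /a mem_nth.
have a_onto x : x \in DF -> exists i, a i = x.
  move=> xD; have lt : (index x (enum_fset DF) < #|` DF|)%N by rewrite index_mem.
  by exists (Ordinal lt); rewrite /a nth_index.
have [i0 ai0] := a_onto u uDF; exists a, i0; split => // i j /= e.
have /eqP : a i = a j by apply: (eq_src_rng HA HP); rewrite ?sDF.
by rewrite /a nth_uniq ?fset_uniq // => /eqP/val_inj.
Qed.

Lemma near_section_conditions K (Z : set T) N (a : 'I_N -> T) (B : 'I_N -> set T)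
    (E : 'I_N -> 'I_N -> set T) u :
  compact K -> open Z -> (forall i, s (a i) = u) ->
  (forall i, compact_open_bisection G (B i)) -> (forall i, B i (a i)) ->
  (forall i j, open (E i j)) -> (forall i j, E i j (mul (a i) (inv (a j)))) ->
  (forall i k, K k -> s k = r (a i) -> Z (mul k (a i))) ->
  \forall w \near u, [/\ forall i, exists b, B i b /\ s b = w,
    forall i j b c, B i b -> B j c -> s b = w -> s c = w -> E i j (mul b (inv c)) &
    forall i b, B i b -> s b = w -> forall k, K k -> s k = r b -> Z (mul k b)].
Proof.
move=> cK oZ sa cobB Ba oE aE KZ.
have oB i : open (B i) by case: (cobB i).
have bB i : bisection G (B i) by case: (cobB i).
have near_over i : \forall w \near u, exists b, B i b /\ s b = w.
  by rewrite -(sa i); exact (near_src_image HS (oB i) (Ba i)).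
have near_connect (ij : 'I_N * 'I_N) : \forall w \near u, forall b c,
    B ij.1 b -> B ij.2 c -> s b = w -> s c = w -> E ij.1 ij.2 (mul b (inv c)).
  have sa12 : s (a ij.1) = s (a ij.2) by rewrite !sa.
  rewrite -(sa ij.1); exact (near_mul_inv HS (oB _) (bB _) (Ba _) (oB _) (bB _)
    (Ba _) sa12 (oE _ _) (aE _ _)).
have near_Z i : \forall w \near u, forall b, B i b -> s b = w ->
    forall k, K k -> s k = r b -> Z (mul k b).
  by rewrite -(sa i); exact (near_translates_in HS cK oZ (oB i) (bB i) (Ba i) (KZ i)).
apply: filterS (filterI (filter_forall (nbhs_filter u) near_over) (filterI
  (filter_forall (nbhs_filter u) near_connect) (filter_forall (nbhs_filter u) near_Z))).
by move=> w [h1 [h2 h3]]; split => // i j; exact: (h2 (i, j)).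
Qed.

(* Spread a finite Foelner set [DF] at [u] over a neighbourhood of [u] by
   sections [B i] through its points: [Z] collects [DF] and the boundary of
   [DF], so that [K]-translates of the sections near [u] fall into [Z]. *)
Lemma exists_local_tower (ufa : ubiquitously_fiberwise_amenable G) K (eps : R) u :
  compact K -> (0 < eps)%R -> units G u ->
  exists N B E i0 O, O u /\ @local_tower K eps N B E i0 O.
Proof.
move=> cK eps0 uu.
have [DF [uDF sDF [X [hX cX]]]] := folner_fset_at_unit HS HP ufa cK eps0 uu.
have [a [i0 [ai0 ra_inj aD a_onto]]] := enum_src_fiber uDF sDF.
have sa i : s (a i) = u := sDF _ (aD i).
have ua : units G (a i0) by rewrite ai0.
have [B [cobB Ba Bu disjB]] := exists_separated_sections ra_inj ua.
have Eex (ij : 'I_#|` DF| * 'I_#|` DF|) :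
    exists E, compact_open_bisection G E /\ E (mul (a ij.1) (inv (a ij.2))).
  have [E [cobE aE _]] := ample_basis HS (x := mul (a ij.1) (inv (a ij.2))) openT I.
  by exists E.
have [E hE] := choice Eex; have [Y hY] := choice (etale_bisection HS).
have bB i : bisection G (B i) by case: (cobB i).
have bY x : bisection G (Y x) by case: (hY x) => -[].
pose Z := [set y | (exists i, B i y) \/ exists2 x, x \in X & Y x y].
have oZ : open Z.
  rewrite openE => y [[i Bi]|[x xX Yy]].
    apply: (@filterS _ _ _ (B i)); first by move=> z Bz; left; exists i.
    by apply: open_nbhs_nbhs; split => //; case: (cobB i).
  apply: (@filterS _ _ _ (Y x)); first by move=> z Yz; right; exists x.
  by apply: open_nbhs_nbhs; split => //; case: (hY x) => -[].
have KZ i k : K k -> s k = r (a i) -> Z (mul k (a i)).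
  move=> Kk e; have [kaD|kaD] := boolP (mul k (a i) \in DF).
    by have [j <-] := a_onto _ kaD; left; exists j.
  have : [set` X] (mul k (a i)).
    by rewrite hX; split; [exists k, (a i); split => //; exact: aD | apply/negP].
  by right; exists (mul k (a i)) => //; case: (hY (mul k (a i))).
have oE i j : open (E (i, j)) by case: (hE (i, j)) => -[].
have aE i j : E (i, j) (mul (a i) (inv (a j))) by case: (hE (i, j)).
have := near_section_conditions cK oZ sa cobB Ba oE aE KZ.
set P := (fun w => _) => nP.
exists #|` DF|, B, (fun i j => E (i, j)), i0, ([set w | P w]° `&` units G).
split; first by split.
split => //.
- by apply: openI; [exact: open_interior | exact: open_units HS].
- by move=> i j; case: (hE (i, j)).
- by move=> w [/interior_subset []].
- by move=> w [/interior_subset [_ h2 _] _] i j; exact: (h2 i j).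
move=> w [/interior_subset [h1 _ h3] _].
exact: folner_of_sections bB bY disjB h1 h3 (leq_ltn_trans (leq0n _) (ltn_ord i0)) cX.
Qed.

End LocalTowers.

Section Tower.
Context {T : topologicalType} (G : groupoid T).
Local Notation s := (gsrc G).
Local Notation r := (grng G).
Local Notation mul := (gmul G).
Local Notation inv := (ginv G).
Hypotheses (HS : standing_groupoid G) (HP : principal G).
Let HA := standing_groupoid_axioms HS.
Variables (K : set T) (eps : R) (N : nat) (B : 'I_N -> set T)
  (E : 'I_N -> 'I_N -> set T) (i0 : 'I_N) (O W : set T).
Hypotheses (LT : local_tower G K eps B E i0 O) (WO : W `<=` O).

Definition tower (i j : 'I_N) : set T :=
  [set g | exists a b, [/\ B i a, B j b, s a = s b, W (s b) & g = mul a (inv b)]].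

Let bB i : bisection G (B i).
Proof. by case: (local_tower_sections LT i). Qed.

Let over w i : W w -> exists a, B i a /\ s a = w.
Proof. by move=> /WO Ow; exact (local_tower_over LT Ow i). Qed.

Let src_tower_pt a b : s a = s b -> s (mul a (inv b)) = r b.
Proof. by move=> /(rng_src_mul_inv HA) []. Qed.

Let rng_tower_pt a b : s a = s b -> r (mul a (inv b)) = r a.
Proof. by move=> /(rng_src_mul_inv HA) []. Qed.

Lemma tower_base i : tower i i0 = [set a | B i a /\ W (s a)].
Proof.
have ub : B i0 `<=` units G := local_tower_base LT.
apply/seteqP; split => [g [a [b [Ba Bb sab Wb ->]]]|a [Ba Wa]].
  have -> : mul a (inv b) = a.
    apply: (eq_src_rng HA HP); last exact: rng_tower_pt.
    by rewrite src_tower_pt // sab (units_rng HA (ub _ Bb)) (units_src HA (ub _ Bb)).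
  by split => //; rewrite sab.
have [b [Bb sb]] := over i0 Wa; have ubb := ub _ Bb.
have sab : s a = s b by rewrite -sb (units_src HA ubb).
exists a, b; split => //; first by rewrite -sab.
apply: (eq_src_rng HA HP); last by rewrite rng_tower_pt.
by rewrite src_tower_pt // (units_rng HA ubb) -(units_src HA ubb).
Qed.

Lemma tower_diag : tower i0 i0 = W.
Proof.
rewrite tower_base; apply/seteqP; split => [w [Bw Ww]|w Ww].
  by rewrite -(units_src HA (local_tower_base LT Bw)).
have [a [Ba sa]] := over i0 Ww.
have aw : a = w by rewrite -sa (units_src HA (local_tower_base LT Ba)).
by split; rewrite -aw // sa.
Qed.

Lemma tower_bisection i j : bisection G (tower i j).
Proof.
split=> _ _ [a [b [Ba Bb sab _ ->]]] [a' [b' [Ba' Bb' sab' _ ->]]].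
  rewrite !rng_tower_pt // => raa'; have aa' : a = a' by apply: (bB i).1.
  have bb' : b = b' by apply: (bB j).2 => //; rewrite -sab -sab' aa'.
  by rewrite aa' bb'.
rewrite !src_tower_pt // => rbb'; have bb' : b = b' by apply: (bB j).1.
have aa' : a = a' by apply: (bB i).2 => //; rewrite sab sab' bb'.
by rewrite aa' bb'.
Qed.

Lemma tower_mul i j k : setmul G (tower i j) (tower j k) = tower i k.
Proof.
apply/seteqP; split => g.
  move=> [_ [_ [[a [b [Ba Bb sab Wb ->]]] [b' [c [Bb' Bc sbc Wc ->]]] comp ->]]].
  move: comp; rewrite src_tower_pt // rng_tower_pt // => rbb'.
  have bb' : b = b' by apply: (bB j).1.
  subst b'; exists a, c; split => //; first by rewrite sab.
  have comp : s (mul a (inv b)) = r (mul b (inv c)) by rewrite src_tower_pt ?rng_tower_pt.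
  apply: (eq_src_rng HA HP).
    by rewrite (src_mul HA comp) !src_tower_pt // sab.
  by rewrite (rng_mul HA comp) !rng_tower_pt // sab.
move=> [a [c [Ba Bc sac Wc ->]]]; have [b [Bb sb]] := over j Wc.
have comp : s (mul a (inv b)) = r (mul b (inv c)) by rewrite src_tower_pt ?rng_tower_pt ?sb.
exists (mul a (inv b)), (mul b (inv c)); split => //.
- by exists a, b; split => //; rewrite ?sac ?sb.
- by exists b, c; split => //; rewrite sb.
apply: (eq_src_rng HA HP).
  by rewrite (src_mul HA comp) !src_tower_pt ?sb.
by rewrite (rng_mul HA comp) !rng_tower_pt ?sac ?sb.
Qed.

Lemma tower_diag_units i : tower i i `<=` units G.
Proof.
move=> _ [a [b [Ba Bb sab _ ->]]]; have ab : a = b by apply: (bB i).2.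
by apply: HP; rewrite src_tower_pt // rng_tower_pt // ab.
Qed.

Lemma tower_diag_disjoint i j : i != j -> tower i i `&` tower j j = set0.
Proof.
move=> ne; apply/seteqP; split => // _ [[a [b [Ba _ sab _ ->]]]].
move=> [a' [b' [Ba' _ sab' _ e]]]; apply: (local_tower_disjoint LT ne Ba Ba').
by rewrite -(rng_tower_pt sab) e rng_tower_pt.
Qed.

Hypotheses (cW : compact W) (oW : open W).

Lemma tower_compact_open i j : compact (tower i j) /\ open (tower i j).
Proof.
have [cE oE bE] := local_tower_connectors LT i j.
have [cBj oBj _] := local_tower_sections LT j.
pose V := r @` (B j `&` s @^-1` W).
have cs := continuous_src HS.
have -> : tower i j = E i j `&` s @^-1` V.
  apply/seteqP; split => [_ [a [b [Ba Bb sab Wb ->]]]|g [Eg [b [Bb Wb] sg]]].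
    split; last by exists b; rewrite ?src_tower_pt.
    by apply: (local_tower_connect LT (WO Wb)).
  have [a [Ba sa]] := over i Wb; exists a, b; split => //.
  apply: bE.2 => //; last by rewrite src_tower_pt.
  exact: (local_tower_connect LT (WO Wb)).
split.
  apply: compact_closedI => //; apply: preimage_closed => [x _|]; first exact: cs.
  apply: (compact_closedG HS); apply: continuous_compact; last first.
    by apply: compact_closedI => //; apply: preimage_closed => [x _|];
      [exact: cs | exact: (compact_closedG HS)].
  by apply: continuous_subspaceT; exact: continuous_rng HS.
have open_src_pre A : open A -> open (s @^-1` A) by exact: (continuousP _).1 cs A.
apply: openI => //; apply/open_src_pre/(open_rng_image HS).
exact/openI/open_src_pre.
Qed.

Lemma tower_multisection : multisection G tower.
Proof.
split; [exact: tower_bisection | exact: tower_mul | exact: tower_diag_units |].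
exact: tower_diag_disjoint.
Qed.

End Tower.

Section GluingTowers.
(* Keep the index [l] of [B l] and [E l] explicit. *)
Local Unset Implicit Arguments.
Context {T : topologicalType} (G : groupoid T).
Local Notation s := (gsrc G).
Hypotheses (HS : standing_groupoid G) (HP : principal G).
Variables (K : set T) (eps : R) (m : nat) (n : 'I_m -> nat)
  (B : forall l, 'I_(n l) -> set T) (E : forall l, 'I_(n l) -> 'I_(n l) -> set T)
  (il : forall l, 'I_(n l)) (O W : 'I_m -> set T).
Hypotheses (LT : forall l : 'I_m, local_tower G K eps (B l) (E l) (il l) (O l))
  (WO : forall l, W l `<=` O l) (coW : forall l, compact (W l) /\ open (W l))
  (disjW : forall l l' x, W l x -> W l' x -> l = l')
  (unitsW : units G = [set x | exists l, W l x]).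

Local Notation C l := (tower G (B l) (W l)).
Local Set Implicit Arguments.

Lemma normal_folner_towers :
  normal_folner G K eps [set g | exists l i, C l i (il l) g].
Proof.
have Cco l i j : compact (C l i j) /\ open (C l i j).
  by case: (coW l) => cW oW; exact (tower_compact_open HS (LT l) (WO l) cW oW i j).
have Cbase l i := tower_base HS HP (LT l) (WO l) i.
split; first split.
- apply: (compact_bigcup_fin (F := fun l g => exists i, C l i (il l) g)) => l.
  by apply: compact_bigcup_fin => i; case: (Cco l i (il l)).
split.
  rewrite openE => g [l [i Cg]]; apply: (@filterS _ _ _ (C l i (il l))).
    by move=> y Cy; exists l, i.
  by apply: open_nbhs_nbhs; split => //; case: (Cco l i (il l)).
exists m, n, (fun l => C l), il; split => //.
- by move=> l; exact (tower_multisection HS HP (LT l) (WO l)).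
- split => // l i j ne; rewrite !Cbase; apply/seteqP; split => // a [[Bi _] [Bj _]].
  exact: (local_tower_disjoint (LT l) ne Bi Bj).
- by rewrite unitsW; apply/seteqP; split => x [l Wl]; exists l;
    rewrite ?(tower_diag HS HP (LT l) (WO l)) in Wl *.
- move=> l l' ne; rewrite !(tower_diag HS HP (LT _) (WO _)).
  apply/seteqP; split => // x [Wl Wl'].
  by move: ne; rewrite (disjW _ _ _ Wl Wl') eqxx.
move=> u uu; have [l Wl] : [set x | exists l, W l x] u by rewrite -unitsW.
have -> : fiber G [set g | exists l i, C l i (il l) g] u =
    [set a | exists i, B l i a /\ s a = u].
  apply/seteqP; split => a.
    move=> [[l' [i]]]; rewrite Cbase => -[Ba Wa] sa.
    by rewrite sa in Wa; have ll' := disjW _ _ _ Wa Wl; subst l'; exists i.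
  by move=> [i [Ba sa]]; split => //; exists l, i; rewrite Cbase; split; rewrite ?sa.
exact (local_tower_folner (LT l) (WO _ _ Wl)).
Qed.

End GluingTowers.

Lemma local_tower_cover {T : topologicalType} (G : groupoid T) :
  standing_groupoid G -> principal G -> ubiquitously_fiberwise_amenable G ->
  forall K (eps : R), compact K -> (0 < eps)%R ->
  exists (m : nat) (n : 'I_m -> nat) (B : forall l, 'I_(n l) -> set T)
    (E : forall l, 'I_(n l) -> 'I_(n l) -> set T) (il : forall l, 'I_(n l))
    (O W : 'I_m -> set T),
  [/\ forall l, local_tower G K eps (B l) (E l) (il l) (O l),
      forall l, W l `<=` O l, forall l, compact (W l) /\ open (W l) &
      units G `<=` [set x | exists l, W l x]].
Proof.
move=> HS HP ufa K eps cK eps0.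
pose data := {N : nat & ('I_N -> set T) * ('I_N -> 'I_N -> set T) * 'I_N * set T}%type.
pose good (W : set T) (t : data) := W `<=` (projT2 t).2 /\
  local_tower G K eps (projT2 t).1.1.1 (projT2 t).1.1.2 (projT2 t).1.2 (projT2 t).2.
have Wex u : exists W, units G u ->
    [/\ compact W, open W, W u & exists t, good W t].
  have [uu|nu] := pselect (units G u); last by exists set0 => /nu.
  have [N [B [E [i0 [U [Uu LT]]]]]] := exists_local_tower HS HP ufa cK eps0 uu.
  have [W [[cW oW _] Wu WU]] := ample_basis HS (local_tower_open LT) Uu.
  by exists W => _; split => //; exists (existT _ N (B, E, i0, U)).
have [W hW] := choice Wex.
have nW u : units G u -> nbhs u (W u).
  by move=> /hW [_ oW Wu _]; apply: open_nbhs_nbhs.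
have [D [Du cov]] := compact_fin_subcover (compact_units HS) nW.
pose pt (l : 'I_#|` D|) := tnth (in_tuple (enum_fset D)) l.
have ptu l : units G (pt l) by apply: Du; rewrite /pt mem_tnth.
have tex l : exists t, good (W (pt l)) t by case: (hW _ (ptu l)).
have [t ht] := choice tex.
exists #|` D|, (fun l => projT1 (t l)), (fun l => (projT2 (t l)).1.1.1),
  (fun l => (projT2 (t l)).1.1.2), (fun l => (projT2 (t l)).1.2),
  (fun l => (projT2 (t l)).2), (fun l => W (pt l)).
split => [l|l|l|x /cov [y yD Wy]]; first exact: (ht l).2.
- exact: (ht l).1.
- by case: (hW _ (ptu l)).
have lt : (index y (enum_fset D) < #|` D|)%N by rewrite index_mem.
by exists (Ordinal lt); rewrite /pt (tnth_nth y) nth_index.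
Qed.

Theorem mainTheorem9 (T : topologicalType) (G : groupoid T) :
  standing_groupoid G -> principal G -> ubiquitously_fiberwise_amenable G ->
  forall K : set T, compact K -> forall eps : R, (0 < eps)%R ->
    exists S : set T, normal_folner G K eps S.
Proof.
move=> HS HP ufa K cK eps eps0.
have [m [n [B [E [il [U [W [LT WU coW cov]]]]]]]] :=
  local_tower_cover HS HP ufa cK eps0.
have WU' l : disjointed_fin W l `<=` U l by move=> x /disjointed_fin_sub /WU.
have hT := standing_hausdorff HS.
have coW' := compact_open_disjointed_fin hT coW.
have unitsW' : units G = [set x | exists l, disjointed_fin W l x].
  apply/seteqP; split => [x /cov /disjointed_fin_cover //|x [l /WU']].
  by move=> Ux; exact (local_tower_units (LT l) Ux).
eexists; exact: (normal_folner_towers HS HP LT WU' coW' (@disjointed_fin_disjoint _ _ W) unitsW').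
Qed.
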